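(* Let $a\ge7$ be an odd integer and $M_a=(4,6,a,a+2)$. Then $$I_{M_a}=\mathrm{rad}\big(x_1^{(a+1)/2}-x_3x_4,\;x_1^3-x_2^2,\;x_3^{a+2}-x_4^{a},\;x_1x_4-x_2x_3\big)$$ in $K[x_1,x_2,x_3,x_4]$, for any field $K$.
   Context: For a $1\times n$ integer row matrix $M=(a_1,\dots,a_n)$ (positive entries), the toric ideal $I_M\subseteq K[x_1,\dots,x_n]$ is the kernel of $K[x_1,\dots,x_n]\to K[t]$, $x_i\mapsto t^{a_i}$. *)

From HB Require Import structures.
From mathcomp Require Import all_boot all_algebra.
From mathcomp Require Import mpoly.
Set Implicit Arguments. Unset Strict Implicit. Unset Printing Implicit Defensive.
Import GRing.Theory.
Local Open Scope ring_scope.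

(* Toric ideal of the 1 x n row matrix M = (M_0,...,M_{n-1}) of positive
   integers: the kernel of the K-algebra map K[x_1..x_n] -> K[t],
   x_i |-> t^(M_i). *)
Definition toric_ideal (K : fieldType) (n : nat) (M : 'I_n -> nat)
  : {mpoly K[n]} -> Prop :=
  fun p => mmap (fun c : K => c%:P) (fun i => 'X^(M i) : {poly K}) p = 0.

Definition in_ideal (K : fieldType) (n k : nat) (g : 'I_k -> {mpoly K[n]})
  (p : {mpoly K[n]}) : Prop :=
  exists c : 'I_k -> {mpoly K[n]}, p = \sum_(j < k) c j * g j.

Definition in_rad_ideal (K : fieldType) (n k : nat) (g : 'I_k -> {mpoly K[n]})
  (p : {mpoly K[n]}) : Prop :=
  exists e : nat, in_ideal g (p ^+ e).

Definition Ma (a : nat) : 'I_4 -> nat := fun i => nth 0%N [:: 4; 6; a; a + 2]%N i.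

(* Generators: x1^((a+1)/2) - x3 x4, x1^3 - x2^2, x3^(a+2) - x4^a, x1 x4 - x2 x3
   (variables x1..x4 are 'X_0..'X_3). *)
Definition gens (K : fieldType) (a : nat) : 'I_4 -> {mpoly K[4]} :=
  fun i => nth 0
   [:: 'X_0 ^+ ((a + 1) %/ 2) - 'X_2 * 'X_3;
       'X_0 ^+ 3 - 'X_1 ^+ 2;
       'X_2 ^+ (a + 2) - 'X_3 ^+ a;
       'X_0 * 'X_3 - 'X_1 * 'X_2] i.

From HB Require Import structures.
From mathcomp Require Import all_boot all_algebra.
From mathcomp Require Import mpoly.
From mathcomp Require Import ring zify.
Set Implicit Arguments. Unset Strict Implicit. Unset Printing Implicit Defensive.
Import GRing.Theory.
Local Open Scope ring_scope.

(* Let J be the ideal of the four binomials.  They lie in the kernel of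
   x_i |-> t^(M_i), which is prime since K[t] is a domain, so rad J is
   contained in I_M.  Conversely, each weight w >= a + 6 has a standard
   monomial nf w, and modulo J a large enough power of x1 times any monomial
   reduces to the standard monomial of its weight.  For p in I_M the
   coefficients of each weight sum to zero, hence x1^N p is in J.  Modulo
   J + (x1) every variable is nilpotent and p has no constant term, so
   p^e = x1 q + j with j in J, and p^(eN+1) = p (x1 q + j)^N is congruent to
   q^N (x1^N p), hence to 0, modulo J. *)

Notation "p = q %[mod_ideal g ]" := (in_ideal g (p - q))
  (at level 70, q at next level, format "p  =  q  %[mod_ideal  g ]") : ring_scope.

Section IdealMembership.
Variables (K : fieldType) (n k : nat) (g : 'I_k -> {mpoly K[n]}).
Implicit Types (p q r u y : {mpoly K[n]}).

Lemma in_ideal0 : in_ideal g 0.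
Proof. by exists (fun _ => 0); rewrite big1 // => j _; rewrite mul0r. Qed.

Lemma in_idealD p q : in_ideal g p -> in_ideal g q -> in_ideal g (p + q).
Proof.
case=> c -> [d ->]; exists (fun j => c j + d j).
by rewrite -big_split; apply: eq_bigr => j _; rewrite mulrDl.
Qed.

Lemma in_idealMl q p : in_ideal g p -> in_ideal g (q * p).
Proof.
case=> c ->; exists (fun j => q * c j).
by rewrite mulr_sumr; apply: eq_bigr => j _; rewrite mulrA.
Qed.

Lemma in_ideal_gen j : in_ideal g (g j).
Proof.
exists (fun i => (i == j)%:R); rewrite (bigD1 j) //= eqxx mul1r big1 ?addr0 //.
by move=> i /negbTE ->; rewrite mul0r.
Qed.

Lemma in_ideal_sum (I : eqType) (s : seq I) (F : I -> {mpoly K[n]}) :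
  (forall i, i \in s -> in_ideal g (F i)) -> in_ideal g (\sum_(i <- s) F i).
Proof.
elim: s => [|x s IHs] Fs; first by rewrite big_nil; apply: in_ideal0.
rewrite big_cons; apply: in_idealD; first by apply: Fs; rewrite mem_head.
by apply: IHs => i s_i; apply: Fs; rewrite inE s_i orbT.
Qed.

Lemma eqmod_ideal_trans q p r :
  p = q %[mod_ideal g] -> q = r %[mod_ideal g] -> p = r %[mod_ideal g].
Proof. by move=> pq qr; rewrite -[p](subrK q) -addrA; apply: in_idealD. Qed.

Lemma eqmod_idealMl r p q : p = q %[mod_ideal g] -> r * p = r * q %[mod_ideal g].
Proof. by rewrite -mulrBr; apply: in_idealMl. Qed.

Lemma eqmod_ideal_expD j y N : in_ideal g j -> (j + y) ^+ N = y ^+ N %[mod_ideal g].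
Proof.
move=> g_j; elim: N => [|N IHN]; first by rewrite !expr0 subrr; apply: in_ideal0.
rewrite exprS [y ^+ N.+1]exprS mulrDl -addrA -mulrBr.
by apply: in_idealD; [rewrite mulrC; apply: in_idealMl | apply: in_idealMl].
Qed.

(* Grouping the terms of [p] by weight turns [u * p] into a combination of
   the weight sums of [p], modulo the ideal. *)
Lemma in_ideal_mul_of_weight (w : 'X_{1..n} -> nat) (nf : nat -> {mpoly K[n]}) u p :
  (forall m, m \in msupp p -> u * 'X_[m] = nf (w m) %[mod_ideal g]) ->
  (forall d, \sum_(m <- msupp p) p@_m * (w m == d)%:R = 0) ->
  in_ideal g (u * p).
Proof.
move=> nfE wsum0.
rewrite -[u * p]subr0 -(_ : \sum_(m <- msupp p) p@_m *: nf (w m) = 0).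
  rewrite {1}(mpolyE p) mulr_sumr -sumrB; apply: in_ideal_sum => m supp_m.
  rewrite -scalerAr -scalerBr -mul_mpolyC; exact/in_idealMl/nfE.
pose B := (\max_(m <- msupp p) w m).+1.
have nf_split m : m \in msupp p ->
    nf (w m) = \sum_(d < B) (w m == d)%:R *: nf d.
  move=> supp_m; have lt_wB : (w m < B)%N by rewrite ltnS leq_bigmax_seq.
  rewrite (bigD1 (Ordinal lt_wB)) //= eqxx scale1r big1 ?addr0 // => d ne_d.
  suff /negbTE -> : w m != d by rewrite scale0r.
  by apply: contraNneq ne_d => wd; apply/eqP/val_inj; rewrite /= wd.
rewrite big_seq; under eq_bigr => m supp_m do rewrite nf_split // scaler_sumr.
rewrite -big_seq exchange_big big1 //= => d _.
by under eq_bigr do rewrite scalerA; rewrite -scaler_suml wsum0 scale0r.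
Qed.

Lemma in_rad_idealMl q p : in_rad_ideal g p -> in_rad_ideal g (q * p).
Proof. by case=> e g_pe; exists e; rewrite exprMn; apply: in_idealMl. Qed.

Lemma in_rad_idealD p q : in_rad_ideal g p -> in_rad_ideal g q -> in_rad_ideal g (p + q).
Proof.
case=> e g_pe [f g_qf]; exists (e + f)%N; rewrite exprDn.
apply: in_ideal_sum => i _; rewrite -mulr_natl; apply: in_idealMl.
have [le_fi|lt_if] := leqP f i.
  by rewrite -(subnK le_fi) exprD mulrA; apply: in_idealMl.
have -> : (e + f - i = (f - i) + e)%N by lia.
by rewrite exprD mulrAC; apply: in_idealMl.
Qed.

Lemma in_rad_ideal_sum (I : Type) (s : seq I) (F : I -> {mpoly K[n]}) :
  (forall i, in_rad_ideal g (F i)) -> in_rad_ideal g (\sum_(i <- s) F i).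
Proof.
move=> gF; elim: s => [|x s IHs]; last by rewrite big_cons; apply: in_rad_idealD.
by exists 1%N; rewrite big_nil expr1; apply: in_ideal0.
Qed.

Lemma in_rad_ideal_of_vars p :
  (forall i, in_rad_ideal g 'X_i) -> p@_0 = 0 -> in_rad_ideal g p.
Proof.
move=> gX p0; rewrite (mpolyE p); apply: in_rad_ideal_sum => m.
have [->|nz_m] := eqVneq m 0%MM.
  by rewrite p0 scale0r; exists 1%N; rewrite expr1; apply: in_ideal0.
have [i m_i_gt0] : exists i, (0 < m i)%N.
  apply/existsP; apply: contraNT nz_m => /existsPn m_0; apply/eqP/mnmP => i.
  by rewrite mnm0E; apply/eqP; rewrite -leqn0 leqNgt m_0.
have le_Um : (U_(i) <= m)%MM.
  by apply/mnm_lepP => j; rewrite mnm1E; case: eqP => // <-.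
rewrite -(submK le_Um) addmC mpolyXD scalerAr mulrC.
exact/in_rad_idealMl.
Qed.

Definition cons_gen (z : {mpoly K[n]}) : 'I_k.+1 -> {mpoly K[n]} :=
  fun j => if unlift ord0 j is Some j' then g j' else z.

Lemma in_ideal_consP z p :
  in_ideal (cons_gen z) p <-> exists c, p = c * z %[mod_ideal g].
Proof.
split=> [[c ->]|[c [d g_p]]].
  exists (c ord0); rewrite big_ord_recl /cons_gen unlift_none addrAC subrr add0r.
  by apply: in_ideal_sum => j _; rewrite liftK; apply/in_idealMl/in_ideal_gen.
exists (fun j => if unlift ord0 j is Some j' then d j' else c).
rewrite big_ord_recl /cons_gen unlift_none.
by under eq_bigr do rewrite liftK; rewrite -g_p addrC subrK.
Qed.

Lemma in_rad_ideal_of_cons z N p :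
  in_ideal g (z ^+ N * p) -> in_rad_ideal (cons_gen z) p -> in_rad_ideal g p.
Proof.
move=> g_zp [e /in_ideal_consP [c g_pe]]; exists (e * N).+1.
have := eqmod_ideal_expD (c * z) N g_pe; rewrite subrK => /(eqmod_idealMl p) g_diff.
rewrite exprS exprM -[X in in_ideal _ X](subrK (p * (c * z) ^+ N)).
apply: in_idealD g_diff _; rewrite exprMn mulrCA [p * _]mulrC.
exact: in_idealMl.
Qed.

End IdealMembership.

Arguments eqmod_ideal_trans {K n k g} q {p r}.

Section ToricMap.
Variables (K : fieldType) (n : nat) (M : 'I_n -> nat).
Implicit Types p : {mpoly K[n]}.

Definition toric_map : {rmorphism {mpoly K[n]} -> {poly K}} :=
  mmap (fun c : K => c%:P) (fun i => 'X^(M i)).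

Definition mwgt (m : 'X_{1..n}) : nat := (\sum_i M i * m i)%N.

Lemma toric_mapX i : toric_map 'X_i = 'X^(M i).
Proof. by rewrite /toric_map /= mmapX mmap1U. Qed.

Lemma coef_toric_map p d :
  (toric_map p)`_d = \sum_(m <- msupp p) p@_m * (mwgt m == d)%:R.
Proof.
rewrite /toric_map /= /mmap coef_sum; apply: eq_bigr => m _.
have -> : mmap1 (fun i => 'X^(M i)) m = 'X^(mwgt m) :> {poly K}.
  rewrite /mmap1 /mwgt; elim/big_rec2: _ => [|i y1 y2 _ ->]; first by rewrite expr0.
  by rewrite -exprM -exprD.
by rewrite coefCM coefXn eq_sym.
Qed.

Lemma toric_ideal_of_rad k (g : 'I_k -> {mpoly K[n]}) p :
  (forall j, toric_map (g j) = 0) -> in_rad_ideal g p -> toric_ideal M p.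
Proof.
move=> g0 [e [c pe]]; have : toric_map (p ^+ e) = 0.
  by rewrite pe rmorph_sum big1 // => j _; rewrite rmorphM g0 mulr0.
by rewrite rmorphXn => /eqP; rewrite expf_eq0 => /andP [_ /eqP].
Qed.

Hypothesis M_gt0 : forall i, (0 < M i)%N.

Lemma mwgt_eq0 m : (mwgt m == 0)%N = (m == 0%MM).
Proof.
apply/idP/eqP => [/eqP m0|->]; last by rewrite /mwgt big1 // => i _; rewrite mnm0E muln0.
apply/mnmP => i; rewrite mnm0E; apply/eqP.
have : (M i * m i <= mwgt m)%N by rewrite /mwgt (bigD1 i) //= leq_addr.
by rewrite m0 leqn0 muln_eq0 eqn0Ngt M_gt0.
Qed.

Lemma toric_ideal_mcoeff0 p : toric_ideal M p -> p@_0 = 0.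
Proof.
move=> /(congr1 (fun q : {poly K} => q`_0)); rewrite coef_toric_map coef0 => <-.
rewrite {1}(mpolyE p) raddf_sum /=; apply: eq_bigr => m _.
by rewrite mcoeffZ mcoeffX mwgt_eq0.
Qed.

End ToricMap.

Lemma ord4P (P : 'I_4 -> Prop) : P 0 -> P 1 -> P 2 -> P 3 -> forall i, P i.
Proof.
move=> P0 P1 P2 P3 [[|[|[|[|//]]]] lt_i4];
  [have -> : Ordinal lt_i4 = 0 | have -> : Ordinal lt_i4 = 1
  | have -> : Ordinal lt_i4 = 2 | have -> : Ordinal lt_i4 = 3]; by [apply/val_inj |].
Qed.

Section BinomialIdeal.
Variables (K : fieldType) (b : nat).
Local Notation a := b.*2.+1.
Local Notation J := (gens K a).
Local Notation x1 := ('X_0 : {mpoly K[4]}).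
Local Notation x2 := ('X_1 : {mpoly K[4]}).
Local Notation x3 := ('X_2 : {mpoly K[4]}).
Local Notation x4 := ('X_3 : {mpoly K[4]}).

Lemma in_ideal_gens_comb c1 c2 c3 c4 p :
  p = c1 * (x1 ^+ b.+1 - x3 * x4) + c2 * (x1 ^+ 3 - x2 ^+ 2)
      + c3 * (x3 ^+ a.+2 - x4 ^+ a) + c4 * (x1 * x4 - x2 * x3) ->
  in_ideal J p.
Proof.
move=> ->; exists (fun j => nth 0 [:: c1; c2; c3; c4] j).
rewrite !big_ord_recr big_ord0 /gens /= addn2 add0r.
by have -> : ((a + 1) %/ 2 = b.+1)%N by lia.
Qed.

Definition nf_even (w : nat) : {mpoly K[4]} :=
  if (4 %| w)%N then x1 ^+ (w %/ 4) else x2 * x1 ^+ ((w - 6) %/ 4).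

(* [nf w] has weight [w] only when [a + 6 <= w]: below that bound the
   truncated subtractions make it meaningless. *)
Definition nf (w : nat) : {mpoly K[4]} :=
  if odd w then x3 * nf_even (w - a) else nf_even w.

Lemma nf_even_mulX1 w : ~~ odd w -> (6 <= w)%N -> x1 * nf_even w = nf_even (w + 4).
Proof.
move=> ev_w le6w; rewrite /nf_even (dvdn_addl w (dvdnn 4)).
case: ifP => dvd_w; first by rewrite -exprS; congr (_ ^+ _); lia.
by rewrite mulrCA -exprS; congr (_ * _ ^+ _); lia.
Qed.

Lemma nf_even_mulX1n k w :
  ~~ odd w -> (6 <= w)%N -> x1 ^+ k * nf_even w = nf_even (w + 4 * k).
Proof.
move=> ev_w le6w; elim: k => [|k IHk]; first by rewrite expr0 mul1r addn0.
rewrite exprS -mulrA IHk nf_even_mulX1; [congr nf_even | |]; lia.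
Qed.

Lemma nf_even_mulX2 w :
  ~~ odd w -> (6 <= w)%N -> x2 * nf_even w = nf_even (w + 6) %[mod_ideal J].
Proof.
move=> ev_w le6w; rewrite /nf_even.
case: ifP => dvd_w.
  rewrite ifF; last lia.
  have -> : ((w + 6 - 6) %/ 4 = w %/ 4)%N by lia.
  by rewrite subrr; apply: in_ideal0.
rewrite ifT; last lia.
have -> : ((w + 6) %/ 4 = (w - 6) %/ 4 + 3)%N by lia.
apply: (in_ideal_gens_comb (c1 := 0) (c2 := - x1 ^+ ((w - 6) %/ 4)) (c3 := 0) (c4 := 0)).
by rewrite exprD; ring.
Qed.

Lemma nf_mulX1 w : (a + 6 <= w)%N -> x1 * nf w = nf (w + 4).
Proof.
move=> le_w; rewrite /nf oddD addbF.
case: ifP => odd_w; last by rewrite nf_even_mulX1 ?odd_w //; lia.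
by rewrite mulrCA nf_even_mulX1; [congr (_ * nf_even _) | |]; lia.
Qed.

Lemma nf_mulX2 w : (a + 6 <= w)%N -> x2 * nf w = nf (w + 6) %[mod_ideal J].
Proof.
move=> le_w; rewrite /nf oddD addbF.
case: ifP => odd_w; last by apply: nf_even_mulX2; [rewrite odd_w | lia].
have -> : (w + 6 - a = (w - a) + 6)%N by lia.
by rewrite mulrCA -mulrBr; apply: in_idealMl; apply: nf_even_mulX2; lia.
Qed.

Lemma nf_mulX3 w : (a + 6 <= w)%N -> x1 ^+ 3 * x3 * nf w = nf (w + a + 12) %[mod_ideal J].
Proof.
move=> le_w; rewrite /nf.
have -> : odd (w + a + 12) = ~~ odd w by lia.
case: ifP => odd_w /=; last first.
  have -> : (w + a + 12 - a = w + 4 * 3)%N by lia.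
  rewrite -nf_even_mulX1n ?odd_w //; last lia.
  by rewrite -mulrA mulrCA subrr; apply: in_ideal0.
set v := (w - a)%N; have ev_v : ~~ odd v by rewrite /v; lia.
have x1x3_rel : x1 ^+ 3 * x3 ^+ 2 = x2 * x1 ^+ b.+2 %[mod_ideal J].
  apply: (in_ideal_gens_comb (c1 := - x2 * x1) (c2 := x3 ^+ 2) (c3 := 0)
                             (c4 := - x2 * x3)).
  by rewrite !exprS; ring.
apply: (eqmod_ideal_trans (x2 * x1 ^+ b.+2 * nf_even v)).
  have -> : x1 ^+ 3 * x3 * (x3 * nf_even v) = x1 ^+ 3 * x3 ^+ 2 * nf_even v by ring.
  by rewrite -mulrBl mulrC; exact/in_idealMl/x1x3_rel.
rewrite -mulrA nf_even_mulX1n //; last lia.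
have -> : (w + a + 12 = v + 4 * b.+2 + 6)%N by rewrite /v; lia.
by apply: nf_even_mulX2; lia.
Qed.

Lemma nf_mulX4 w : (a + 6 <= w)%N -> x1 ^+ 4 * x4 * nf w = nf (w + a + 18) %[mod_ideal J].
Proof.
move=> le_w; apply: (eqmod_ideal_trans (x2 * nf (w + a + 12))); last first.
  have -> : (w + a + 18 = w + a + 12 + 6)%N by lia.
  by apply: nf_mulX2; lia.
rewrite (_ : _ - _ = x1 ^+ 3 * nf w * (x1 * x4 - x2 * x3)
                     + (x2 * (x1 ^+ 3 * x3 * nf w) - x2 * nf (w + a + 12))); last first.
  by rewrite exprS; ring.
apply: in_idealD; last exact/eqmod_idealMl/nf_mulX3.
exact/in_idealMl/(in_ideal_gen J 3).
Qed.

(* Multiplying by [x_i] raises the weight by [M_i]; the extra powers of [x1]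
   are what the relations need to bring the product back to normal form. *)
Definition x1_shift (i : 'I_4) : nat := nth 0%N [:: 0; 0; 3; 4]%N i.

Lemma nf_mulX i w : (a + 6 <= w)%N ->
  x1 ^+ x1_shift i * 'X_i * nf w = nf (w + (Ma a i + 4 * x1_shift i)) %[mod_ideal J].
Proof.
move=> le_w; move: i; apply: ord4P; rewrite /x1_shift /Ma /=.
- by rewrite expr0 mul1r muln0 addn0 nf_mulX1 // subrr; apply: in_ideal0.
- by rewrite expr0 mul1r muln0 addn0; apply: nf_mulX2.
- by rewrite (_ : (w + _)%N = w + a + 12)%N; [apply: nf_mulX3 | lia].
- by rewrite (_ : (w + _)%N = w + a + 18)%N; [apply: nf_mulX4 | lia].
Qed.

Lemma nf_mulX_pow i k w : (a + 6 <= w)%N ->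
  x1 ^+ (x1_shift i * k) * 'X_i ^+ k * nf w
    = nf (w + (Ma a i + 4 * x1_shift i) * k) %[mod_ideal J].
Proof.
move=> le_w; elim: k => [|k IHk].
  by rewrite !muln0 !expr0 !mul1r addn0 subrr; apply: in_ideal0.
set c := (Ma a i + 4 * x1_shift i)%N.
apply: (eqmod_ideal_trans (x1 ^+ x1_shift i * 'X_i * nf (w + c * k))).
  have -> : x1 ^+ (x1_shift i * k.+1) * 'X_i ^+ k.+1 * nf w
      = x1 ^+ x1_shift i * 'X_i * (x1 ^+ (x1_shift i * k) * 'X_i ^+ k * nf w).
    by rewrite mulnSr exprD exprS; ring.
  exact: eqmod_idealMl.
by rewrite mulnSr addnA; apply: nf_mulX; apply: leq_trans le_w (leq_addr _ _).
Qed.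

Definition x1_cost (m : 'X_{1..4}) : nat := (\sum_i x1_shift i * m i)%N.

Lemma nf_mulXm m w : (a + 6 <= w)%N ->
  x1 ^+ x1_cost m * 'X_[m] * nf w = nf (w + (mwgt (Ma a) m + 4 * x1_cost m)) %[mod_ideal J].
Proof.
have -> : (mwgt (Ma a) m + 4 * x1_cost m = \sum_i (Ma a i + 4 * x1_shift i) * m i)%N.
  rewrite /mwgt /x1_cost big_distrr -big_split.
  by apply: eq_bigr => i _ /=; rewrite mulnDl mulnA.
rewrite [in 'X_[m]]mpolyXE_id /x1_cost; move: w.
elim/big_rec3: _ => [w _|i Xm d c _ IH w le_w].
  by rewrite expr0 !mul1r addn0 subrr; apply: in_ideal0.
apply: (eqmod_ideal_trans (x1 ^+ (x1_shift i * m i) * 'X_i ^+ m i * nf (w + d))).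
  have -> : x1 ^+ (x1_shift i * m i + c) * ('X_i ^+ m i * Xm) * nf w
      = x1 ^+ (x1_shift i * m i) * 'X_i ^+ m i * (x1 ^+ c * Xm * nf w).
    by rewrite exprD; ring.
  exact/eqmod_idealMl/IH.
rewrite addnA addnAC; apply: nf_mulX_pow.
exact: leq_trans le_w (leq_addr _ _).
Qed.

Lemma monomial_eqmod_nf m N : (x1_cost m + a + 6 <= N)%N ->
  x1 ^+ N * 'X_[m] = nf (mwgt (Ma a) m + 4 * N) %[mod_ideal J].
Proof.
move=> le_N; set N1 := (N - x1_cost m)%N.
have nf_N1 : nf (4 * N1) = x1 ^+ N1.
  rewrite /nf /nf_even ifF; last lia.
  by rewrite ifT; [congr (_ ^+ _) | ]; lia.
have -> : x1 ^+ N * 'X_[m] = x1 ^+ x1_cost m * 'X_[m] * nf (4 * N1).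
  by rewrite nf_N1 -(subnK (_ : x1_cost m <= N)%N) -/N1 ?exprD; [ring | lia].
have -> : (mwgt (Ma a) m + 4 * N = 4 * N1 + (mwgt (Ma a) m + 4 * x1_cost m))%N by lia.
by apply: nf_mulXm; lia.
Qed.

Lemma toric_ideal_mulX1 p : toric_ideal (Ma a) p -> exists N, in_ideal J (x1 ^+ N * p).
Proof.
move=> p0; set N := (\max_(m <- msupp p) x1_cost m + a + 6)%N; exists N.
apply: (in_ideal_mul_of_weight (w := mwgt (Ma a)) (nf := fun d => nf (d + 4 * N))).
  by move=> m supp_m; apply: monomial_eqmod_nf; rewrite !leq_add2r leq_bigmax_seq.
by move=> d; rewrite -coef_toric_map (_ : toric_map K (Ma a) p = 0) ?coef0.
Qed.

Lemma X_nilpotent_mod_X1 i : in_rad_ideal (cons_gen J x1) 'X_i.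
Proof.
move: i; apply: ord4P.
- exists 1%N; apply/in_ideal_consP; exists 1.
  by rewrite expr1 mul1r subrr; apply: in_ideal0.
- exists 2%N; apply/in_ideal_consP; exists (x1 ^+ 2).
  by apply: (in_ideal_gens_comb (c1 := 0) (c2 := -1) (c3 := 0) (c4 := 0)); ring.
- exists a.+3; apply/in_ideal_consP; exists (x4 ^+ b.*2 * x1 ^+ b).
  by apply: (in_ideal_gens_comb (c1 := - x4 ^+ b.*2) (c2 := 0) (c3 := x3) (c4 := 0));
    rewrite !exprS; ring.
- exists a.+3; apply/in_ideal_consP; exists (x4 ^+ 2 * x3 ^+ a.+1 * x1 ^+ b).
  apply: (in_ideal_gens_comb (c1 := - x4 ^+ 2 * x3 ^+ a.+1) (c2 := 0)
                             (c3 := - x4 ^+ 3) (c4 := 0)).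
  by rewrite !exprS; ring.
Qed.

Lemma toric_ideal_sub_rad p : toric_ideal (Ma a) p -> in_rad_ideal J p.
Proof.
move=> p0; have [N I_x1p] := toric_ideal_mulX1 p0.
apply: (in_rad_ideal_of_cons I_x1p); apply: in_rad_ideal_of_vars.
  exact: X_nilpotent_mod_X1.
by apply: toric_ideal_mcoeff0 p0; apply: ord4P; rewrite /Ma /= ?addn2.
Qed.

Lemma toric_map_gens j : toric_map K (Ma a) (J j) = 0.
Proof.
move: j; apply: ord4P; rewrite /gens /Ma /= !(rmorphB, rmorphM, rmorphXn, toric_mapX) /=.
- by rewrite -exprM -exprD (_ : (4 * ((a + 1) %/ 2) = a + (a + 2))%N) ?subrr //; lia.
- by rewrite -!exprD subrr.
- by rewrite -!exprM mulnC subrr.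
- by rewrite -!exprD (_ : (4 + (a + 2) = 6 + a)%N) ?subrr //; lia.
Qed.

Lemma rad_sub_toric_ideal p : in_rad_ideal J p -> toric_ideal (Ma a) p.
Proof. exact/toric_ideal_of_rad/toric_map_gens. Qed.

End BinomialIdeal.

Theorem mainTheorem8 (K : fieldType) (a : nat) :
  (7 <= a)%N -> odd a ->
  forall p : {mpoly K[4]}, toric_ideal (Ma a) p <-> in_rad_ideal (gens K a) p.
Proof.
move=> _ odd_a p; have -> : a = (a./2).*2.+1 by rewrite -[LHS]odd_double_half odd_a.
by split; [apply: toric_ideal_sub_rad | apply: rad_sub_toric_ideal].
Qed.
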